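(* Let $(X_n)_{n\ge0}$ be a Markov chain on $\mathbb Z_+$. Suppose there is an integer-valued random variable $\eta$ with $\mathbb E\eta>0$ such that for all $i\in\mathbb Z_+$ and $j\in\mathbb Z$, $\mathbb P\{\eta>j\}\le\mathbb P_i\{X_1-X_0>j\}$. Then there exists $\gamma>0$ such that $\sup_{i\in\mathbb Z_+}\mathbb E_ie^{\gamma\ell(i)}<\infty$.
   Context: $\mathbb P_i,\mathbb E_i$ denote probability and expectation given $X_0=i$; the local time at $i$ is $\ell(i):=\sum_{n=0}^\infty\mathbf 1\{X_n=i\}$. *)

From Stdlib Require Import Reals ZArith ClassicalEpsilon.
Open Scope R_scope.

(* Value of a series sum_{n>=0} f n (the limit when it converges;
   an unspecified real otherwise). All series used below converge. *)
Definition tsum (f : nat -> R) : R :=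
  epsilon (inhabits 0%R) (fun l => infinite_sum f l).

(* A transition kernel on Z_+ = nat: p i j = P_i{X_1 = j}. *)
Definition stochastic_kernel (p : nat -> nat -> R) : Prop :=
  (forall i j, 0 <= p i j) /\ (forall i, infinite_sum (p i) 1).

Definition jump_tail (p : nat -> nat -> R) (i : nat) (j : Z) : R :=
  tsum (fun y => if Z.ltb j (Z.of_nat y - Z.of_nat i) then p i y else 0).

Definition Z_law (q : Z -> R) : Prop :=
  (forall k, 0 <= q k) /\
  infinite_sum (fun n => q (Z.of_nat n) + q (- Z.of_nat n - 1)%Z) 1.

(* P{eta > j} = 1 - P{eta <= j} = 1 - sum_{n>=0} q (j - n) *)
Definition Z_tail (q : Z -> R) (j : Z) : R :=
  1 - tsum (fun n => q (j - Z.of_nat n)%Z).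

(* E eta > 0 : the negative part E eta^- = sum_n n q(-n) is finite and the
   positive part E eta^+ = sum_n n q(n) (possibly +infinity) exceeds it. *)
Definition Z_mean_pos (q : Z -> R) : Prop :=
  exists mneg : R,
    infinite_sum (fun n => INR n * q (- Z.of_nat n)%Z) mneg /\
    exists N : nat, sum_f_R0 (fun n => INR n * q (Z.of_nat n)) N > mneg.

Definition ind (b : bool) : R := if b then 1 else 0.

(* exp_loc p g i n x = E_x exp(g * #{0 <= m <= n : X_m = i}),
   computed by the Markov property. *)
Fixpoint exp_loc (p : nat -> nat -> R) (g : R) (i : nat) (n : nat) (x : nat)
  : R :=
  match n with
  | O => exp (g * ind (Nat.eqb x i))
  | S n' => exp (g * ind (Nat.eqb x i)) *
            tsum (fun y => p x y * exp_loc p g i n' y)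
  end.

(** Fix a level [L] with [E (min eta L)^+ > E eta^-] (possible since [E eta > 0]) and let
    [survival m k] be the probability that the random walk with steps [min eta L] started
    at [k] stays positive up to time [m]. The jumps of the chain stochastically dominate
    [eta >= min eta L], so [E_x phi(X_1 - x) <= E phi(min eta L)] for every decreasing [phi];
    by induction on [n] this gives [E_x e^(g l_n(i)) <= 2 - survival n (x - i)] as soon as
    [e^g (2 - theta) <= 2], where [theta] is a lower bound for the escape probabilities
    [escape m = E survival m (min eta L)]. A positive [theta] comes from a Wald-type
    inequality for the truncated walk,
    [n (E (min eta L)^+ - E eta^-) <= L * sum_(m < n) escape m],
    together with the monotonicity of [escape]. *)

From Coquelicot Require Import Coquelicot.
From Stdlib Require Import Reals ZArith Lia Lra ClassicalEpsilon FunctionalExtensionality.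
Open Scope R_scope.

Lemma tsum_unique (s : nat -> R) (l : R) : is_series s l -> tsum s = l.
Proof.
  intros H. apply is_series_Reals in H. unfold tsum.
  apply (uniqueness_sum s); [|exact H].
  apply epsilon_spec. exists l. exact H.
Qed.

Lemma is_series_tsum (s : nat -> R) : ex_series s -> is_series s (tsum s).
Proof. intros [l H]. rewrite (tsum_unique s l H). exact H. Qed.

Lemma is_series_Rscal (c : R) (a : nat -> R) (l : R) :
  is_series a l -> is_series (fun n => c * a n) (c * l).
Proof. apply (is_series_scal_l (V := R_NormedModule)). Qed.

Lemma is_series_Rlin (a b : nat -> R) (la lb c : R) :
  is_series a la -> is_series b lb -> is_series (fun n => a n + c * b n) (la + c * lb).
Proof.
  intros Ha Hb.
  apply (is_series_plus (V := R_NormedModule) _ _ _ _ Ha (is_series_Rscal c _ _ Hb)).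
Qed.

Lemma is_series_partial_le (a : nat -> R) (l : R) (N : nat) :
  is_series a l -> (forall n, 0 <= a n) -> sum_f_R0 a N <= l.
Proof.
  intros H Ha. apply is_series_Reals in H.
  apply (growing_ineq (fun n => sum_f_R0 a n)); [|exact H].
  intros n; simpl; specialize (Ha (S n)); lra.
Qed.

Lemma is_series_nonneg (a : nat -> R) (l : R) :
  is_series a l -> (forall n, 0 <= a n) -> 0 <= l.
Proof.
  intros H Ha. pose proof (is_series_partial_le a l 0 H Ha). simpl in *.
  specialize (Ha 0%nat). lra.
Qed.

Lemma is_series_le (a b : nat -> R) (la lb : R) :
  is_series a la -> is_series b lb -> (forall n, a n <= b n) -> la <= lb.
Proof.
  intros Ha Hb Hab.
  pose proof (is_series_minus b a lb la Hb Ha) as H.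
  apply is_series_nonneg in H.
  - change (0 <= lb - la) in H. lra.
  - intros n. specialize (Hab n). change (0 <= b n - a n). lra.
Qed.

Lemma is_series_of_bounded_partial (a : nat -> R) (E : R) :
  (forall n, 0 <= a n) -> (forall N, sum_f_R0 a N <= E) ->
  exists l, is_series a l /\ l <= E.
Proof.
  intros Ha HE.
  destruct (growing_cv (fun n => sum_f_R0 a n)) as [l Hl].
  - intros n; simpl; specialize (Ha (S n)); lra.
  - exists E. intros x [n ->]. apply HE.
  - exists l. split; [apply is_series_Reals; exact Hl|].
    apply (Rle_cv_lim (Un := fun n => sum_f_R0 a n) (Vn := fun _ => E)); [exact HE|exact Hl|].
    intros eps Heps; exists 0%nat; intros; unfold R_dist.
    rewrite Rminus_diag, Rabs_R0; lra.
Qed.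

Lemma le_of_le_plus_div_succ (X Y C : R) :
  (forall D : nat, X <= Y + C / (INR D + 1)) -> X <= Y.
Proof.
  intros H. destruct (Rle_or_lt X Y) as [|Hlt]; [assumption|exfalso].
  destruct (archimed (C / (X - Y))) as [Hup _].
  set (D := Z.to_nat (up (C / (X - Y)))).
  assert (HD : C / (X - Y) < INR D + 1).
  { unfold D. destruct (Z_le_gt_dec 0 (up (C / (X - Y)))) as [Hu|Hu].
    - rewrite INR_IZR_INZ, Z2Nat.id by lia. lra.
    - apply Z.gt_lt, IZR_lt in Hu. pose proof (pos_INR (Z.to_nat (up (C / (X - Y))))). lra. }
  specialize (H D). pose proof (pos_INR D).
  apply Rlt_div_l in HD; [|lra].
  assert (C / (INR D + 1) < X - Y) by (apply Rlt_div_l; lra).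
  lra.
Qed.

Definition bounded {A : Type} (f : A -> R) : Prop :=
  exists B, forall x, Rabs (f x) <= B.

Lemma bounded_of_unit_interval {A : Type} (f : A -> R) :
  (forall x, 0 <= f x <= 1) -> bounded f.
Proof.
  intros H. exists 1. intros x. specialize (H x). rewrite Rabs_pos_eq; lra.
Qed.

Lemma bounded_lin {A : Type} (f g : A -> R) (c : R) :
  bounded f -> bounded g -> bounded (fun x => f x + c * g x).
Proof.
  intros [Bf Hf] [Bg Hg]. exists (Bf + Rabs c * Bg). intros x.
  eapply Rle_trans; [apply Rabs_triang|]. rewrite Rabs_mult.
  apply Rplus_le_compat; [apply Hf|].
  apply Rmult_le_compat_l; [apply Rabs_pos|apply Hg].
Qed.

Lemma bounded_const {A : Type} (c : R) : bounded (fun _ : A => c).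
Proof. exists (Rabs c). intros; lra. Qed.

Lemma ind_bounds (b : bool) : 0 <= ind b <= 1.
Proof. destruct b; simpl; lra. Qed.

Lemma bounded_ind {A : Type} (P : A -> bool) : bounded (fun x => ind (P x)).
Proof. apply bounded_of_unit_interval. intros; apply ind_bounds. Qed.

Section KernelExpectation.

Variable p : nat -> nat -> R.
Hypothesis Hp : stochastic_kernel p.

Definition Kexp (x : nat) (f : nat -> R) : R := tsum (fun y => p x y * f y).

Lemma Kexp_is (x : nat) (f : nat -> R) :
  bounded f -> is_series (fun y => p x y * f y) (Kexp x f).
Proof.
  destruct Hp as [Hp0 Hp1]. intros [B HB]. apply is_series_tsum.
  apply (ex_series_le (V := R_CompleteNormedModule) _ (fun y => B * p x y)).
  - intros y. change norm with Rabs. rewrite Rabs_mult, (Rabs_pos_eq (p x y)) by auto.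
    rewrite Rmult_comm. apply Rmult_le_compat_r; auto.
  - exists (B * 1). apply is_series_Rscal, is_series_Reals, Hp1.
Qed.

Lemma Kexp_lin (x : nat) (f g : nat -> R) (c : R) :
  bounded f -> bounded g -> Kexp x (fun y => f y + c * g y) = Kexp x f + c * Kexp x g.
Proof.
  intros Hf Hg. apply tsum_unique.
  eapply is_series_ext; [|apply (is_series_Rlin _ _ _ _ c (Kexp_is x f Hf) (Kexp_is x g Hg))].
  intros y; simpl; ring.
Qed.

Lemma Kexp_const (x : nat) (c : R) : Kexp x (fun _ => c) = c.
Proof.
  destruct Hp as [_ Hp1]. apply tsum_unique.
  pose proof (is_series_Rscal c _ _ (proj2 (is_series_Reals _ _) (Hp1 x))) as H.
  rewrite Rmult_1_r in H. eapply is_series_ext; [|exact H]. intros y; simpl; ring.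
Qed.

Lemma Kexp_le (x : nat) (f g : nat -> R) :
  bounded f -> bounded g -> (forall y, f y <= g y) -> Kexp x f <= Kexp x g.
Proof.
  intros Hf Hg Hfg. apply (is_series_le _ _ _ _ (Kexp_is x f Hf) (Kexp_is x g Hg)).
  intros y. apply Rmult_le_compat_l; [apply Hp|apply Hfg].
Qed.

Lemma Kexp_ext (x : nat) (f g : nat -> R) : (forall y, f y = g y) -> Kexp x f = Kexp x g.
Proof. intros H. f_equal. apply functional_extensionality, H. Qed.

End KernelExpectation.

(* A sum over [Z] pairs [n] with [- n - 1], as in [Z_law]. *)
Definition zterms (q f : Z -> R) (n : nat) : R :=
  q (Z.of_nat n) * f (Z.of_nat n) + q (- Z.of_nat n - 1)%Z * f (- Z.of_nat n - 1)%Z.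

Definition Zexp (q f : Z -> R) : R := tsum (zterms q f).

Definition Zintegrable (q f : Z -> R) : Prop := ex_series (zterms q f).

Section ZExpectation.

Variable q : Z -> R.
Hypothesis Hq : Z_law q.

Lemma Z_law_is_series : is_series (zterms q (fun _ => 1)) 1.
Proof.
  destruct Hq as [_ H]. apply is_series_Reals in H.
  eapply is_series_ext; [|exact H]. intros n; unfold zterms; simpl; ring.
Qed.

Lemma Zexp_is (f : Z -> R) : Zintegrable q f -> is_series (zterms q f) (Zexp q f).
Proof. apply is_series_tsum. Qed.

Lemma Zexp_unique (f : Z -> R) (l : R) : is_series (zterms q f) l -> Zexp q f = l.
Proof. apply tsum_unique. Qed.

Lemma Zintegrable_bounded (f : Z -> R) : bounded f -> Zintegrable q f.
Proof.
  destruct Hq as [Hq0 _]. intros [B HB].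
  apply (ex_series_le (V := R_CompleteNormedModule) _ (zterms q (fun _ => B))).
  - intros n. change norm with Rabs. unfold zterms.
    eapply Rle_trans; [apply Rabs_triang|].
    rewrite !Rabs_mult, !(Rabs_pos_eq (q _)) by auto.
    apply Rplus_le_compat; apply Rmult_le_compat_l; auto.
  - exists (B * 1). eapply is_series_ext; [|apply is_series_Rscal, Z_law_is_series].
    intros n; unfold zterms; simpl; ring.
Qed.

Lemma Zintegrable_const (c : R) : Zintegrable q (fun _ => c).
Proof. apply Zintegrable_bounded, bounded_const. Qed.

Lemma Zintegrable_unit_interval (f : Z -> R) : (forall z, 0 <= f z <= 1) -> Zintegrable q f.
Proof. intros Hf. apply Zintegrable_bounded, bounded_of_unit_interval, Hf. Qed.

Lemma Zintegrable_lin (f g : Z -> R) (c : R) :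
  Zintegrable q f -> Zintegrable q g -> Zintegrable q (fun z => f z + c * g z).
Proof.
  intros [lf Hf] [lg Hg]. exists (lf + c * lg).
  eapply is_series_ext; [|apply (is_series_Rlin _ _ _ _ c Hf Hg)].
  intros n; unfold zterms; simpl; ring.
Qed.

Lemma Zexp_lin (f g : Z -> R) (c : R) :
  Zintegrable q f -> Zintegrable q g ->
  Zexp q (fun z => f z + c * g z) = Zexp q f + c * Zexp q g.
Proof.
  intros Hf Hg. apply Zexp_unique.
  eapply is_series_ext; [|apply (is_series_Rlin _ _ _ _ c (Zexp_is f Hf) (Zexp_is g Hg))].
  intros n; unfold zterms; simpl; ring.
Qed.

Lemma Zintegrable_plus (f g : Z -> R) :
  Zintegrable q f -> Zintegrable q g -> Zintegrable q (fun z => f z + g z).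
Proof.
  intros Hf Hg. replace (fun z => f z + g z) with (fun z => f z + 1 * g z)
    by (apply functional_extensionality; intros; ring).
  apply Zintegrable_lin; assumption.
Qed.

Lemma Zexp_plus (f g : Z -> R) :
  Zintegrable q f -> Zintegrable q g -> Zexp q (fun z => f z + g z) = Zexp q f + Zexp q g.
Proof.
  intros Hf Hg. replace (fun z => f z + g z) with (fun z => f z + 1 * g z)
    by (apply functional_extensionality; intros; ring).
  rewrite Zexp_lin by assumption. ring.
Qed.

Lemma Zexp_const (c : R) : Zexp q (fun _ => c) = c.
Proof.
  apply Zexp_unique. rewrite <- (Rmult_1_r c).
  eapply is_series_ext; [|apply is_series_Rscal, Z_law_is_series].
  intros n; unfold zterms; simpl; ring.
Qed.

Lemma Zexp_le (f g : Z -> R) :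
  Zintegrable q f -> Zintegrable q g -> (forall z, f z <= g z) -> Zexp q f <= Zexp q g.
Proof.
  destruct Hq as [Hq0 _]. intros Hf Hg Hfg.
  apply (is_series_le _ _ _ _ (Zexp_is f Hf) (Zexp_is g Hg)).
  intros n; unfold zterms.
  apply Rplus_le_compat; apply Rmult_le_compat_l; auto.
Qed.

Lemma Zexp_unit_interval (f : Z -> R) : (forall z, 0 <= f z <= 1) -> 0 <= Zexp q f <= 1.
Proof.
  intros Hf. pose proof (Zintegrable_unit_interval f Hf).
  rewrite <- (Zexp_const 0), <- (Zexp_const 1).
  split; apply Zexp_le; auto using Zintegrable_const; intros z; apply Hf.
Qed.

Lemma Zexp_ext (f g : Z -> R) : (forall z, f z = g z) -> Zexp q f = Zexp q g.
Proof. intros H. f_equal. apply functional_extensionality, H. Qed.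

End ZExpectation.

Fixpoint zrange_sum (F : Z -> R) (a : Z) (n : nat) : R :=
  match n with
  | O => 0
  | S n' => zrange_sum F a n' + F (a + Z.of_nat n')%Z
  end.

Lemma zrange_sum_snoc (F : Z -> R) (a : Z) (n : nat) :
  zrange_sum F a (S n) = zrange_sum F a n + F (a + Z.of_nat n)%Z.
Proof. reflexivity. Qed.

Lemma zrange_sum_add (F : Z -> R) (a : Z) (n m : nat) :
  zrange_sum F a (n + m) = zrange_sum F a n + zrange_sum F (a + Z.of_nat n)%Z m.
Proof.
  induction m as [|m IH]; simpl.
  - rewrite Nat.add_0_r; ring.
  - rewrite Nat.add_succ_r; simpl. rewrite IH.
    replace (a + Z.of_nat (n + m))%Z with (a + Z.of_nat n + Z.of_nat m)%Z by lia. ring.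
Qed.

Lemma zrange_sum_nonneg (F : Z -> R) (a : Z) (n : nat) :
  (forall z, 0 <= F z) -> 0 <= zrange_sum F a n.
Proof. intros H; induction n; simpl; [lra|]. specialize (H (a + Z.of_nat n)%Z); lra. Qed.

Lemma zrange_sum_subrange (F : Z -> R) (a b : Z) (n m : nat) :
  (forall z, 0 <= F z) -> (b <= a)%Z -> (a + Z.of_nat n <= b + Z.of_nat m)%Z ->
  zrange_sum F a n <= zrange_sum F b m.
Proof.
  intros HF Hba Hnm.
  replace m with (Z.to_nat (a - b) + n + (m - Z.to_nat (a - b) - n))%nat by lia.
  rewrite !zrange_sum_add.
  replace (b + Z.of_nat (Z.to_nat (a - b)))%Z with a by lia.
  pose proof (zrange_sum_nonneg F b (Z.to_nat (a - b)) HF).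
  pose proof (zrange_sum_nonneg F (b + Z.of_nat (Z.to_nat (a - b) + n))%Z
                (m - Z.to_nat (a - b) - n) HF).
  lra.
Qed.

Lemma zrange_sum_cons (F : Z -> R) (a : Z) (n : nat) :
  zrange_sum F (a - 1)%Z (S n) = F (a - 1)%Z + zrange_sum F a n.
Proof.
  replace (S n) with (1 + n)%nat by lia. rewrite zrange_sum_add. simpl.
  replace (a - 1 + 1)%Z with a by lia. replace (a - 1 + 0)%Z with (a - 1)%Z by lia. ring.
Qed.

Lemma sum_zterms_zrange (q G : Z -> R) (M : nat) :
  sum_f_R0 (zterms q G) M = zrange_sum (fun z => q z * G z) (- Z.of_nat M - 1)%Z (2 * M + 2).
Proof.
  induction M as [|M IH].
  - simpl. unfold zterms. simpl. ring.
  - simpl sum_f_R0. rewrite IH.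
    replace (2 * S M + 2)%nat with (S (S (2 * M + 2))) by lia.
    replace (- Z.of_nat (S M) - 1)%Z with ((- Z.of_nat M - 1) - 1)%Z by lia.
    rewrite zrange_sum_cons, (zrange_sum_snoc _ _ (2 * M + 2)).
    replace (- Z.of_nat M - 1 + Z.of_nat (2 * M + 2))%Z with (Z.of_nat (S M)) by lia.
    unfold zterms. replace (- Z.of_nat M - 1 - 1)%Z with (- Z.of_nat (S M) - 1)%Z by lia. ring.
Qed.

Lemma sum_down_zrange (F q : Z -> R) (j : Z) (N : nat) :
  (forall z, (z <= j)%Z -> F z = q z) ->
  sum_f_R0 (fun n => q (j - Z.of_nat n)%Z) N = zrange_sum F (j - Z.of_nat N)%Z (S N).
Proof.
  intros HF. induction N as [|N IH].
  - simpl. rewrite Rplus_0_l, HF by lia. f_equal; lia.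
  - simpl sum_f_R0. rewrite IH.
    replace (j - Z.of_nat (S N))%Z with ((j - Z.of_nat N) - 1)%Z by lia.
    rewrite zrange_sum_cons, HF by lia.
    replace (j - Z.of_nat N - 1)%Z with (j - Z.of_nat (S N))%Z by lia. simpl; ring.
Qed.

Lemma Zexp_gt_le_tail (q : Z -> R) (j : Z) :
  Z_law q -> Zexp q (fun z => ind (j <? z)%Z) <= Z_tail q j.
Proof.
  intros Hq. pose proof Hq as [Hq0 _].
  set (G := fun z => ind (z <=? j)%Z).
  assert (HG : Zintegrable q G) by apply (Zintegrable_bounded q Hq), bounded_ind.
  assert (Hsum : Zexp q G + Zexp q (fun z => ind (j <? z)%Z) = 1).
  { transitivity (Zexp q (fun z => G z + 1 * ind (j <? z)%Z)).
    { rewrite Zexp_lin by (auto; apply (Zintegrable_bounded q Hq), bounded_ind). ring. }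
    etransitivity; [|apply (Zexp_const q Hq 1)]. apply Zexp_ext. intros z. unfold G.
    destruct (Z.leb_spec z j), (Z.ltb_spec j z); simpl; try lia; ring. }
  set (F := fun z => q z * G z).
  assert (HF0 : forall z, 0 <= F z).
  { intros z; apply Rmult_le_pos; [apply Hq0|apply ind_bounds]. }
  assert (Hpartial : forall N, sum_f_R0 (fun n => q (j - Z.of_nat n)%Z) N <= Zexp q G).
  { intros N. rewrite (sum_down_zrange F q j N).
    2:{ intros z Hz. unfold F, G. destruct (Z.leb_spec z j); [simpl; ring|lia]. }
    set (M := (Z.to_nat (Z.abs j) + N)%nat).
    eapply Rle_trans.
    { apply (zrange_sum_subrange F _ (- Z.of_nat M - 1)%Z _ (2 * M + 2)); auto; unfold M; lia. }
    unfold F. rewrite <- sum_zterms_zrange. apply is_series_partial_le; [apply Zexp_is, HG|].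
    intros n; unfold zterms. pose proof (HF0 (Z.of_nat n)). pose proof (HF0 (- Z.of_nat n - 1)%Z).
    unfold F in *. lra. }
  destruct (is_series_of_bounded_partial (fun n => q (j - Z.of_nat n)%Z) (Zexp q G))
    as [l [Hl Hle]]; auto.
  unfold Z_tail. rewrite (tsum_unique _ l Hl). lra.
Qed.

Definition negpart (z : Z) : R := IZR (Z.max 0 (- z)).
Definition pospart (z : Z) : R := IZR (Z.max 0 z).

Lemma negpart_nonneg (z : Z) : 0 <= negpart z.
Proof. apply IZR_le; lia. Qed.

Lemma pospart_nonneg (z : Z) : 0 <= pospart z.
Proof. apply IZR_le; lia. Qed.

Section NegativePart.

Variables (q : Z -> R) (mneg : R).
Hypothesis Hmneg : infinite_sum (fun n => INR n * q (- Z.of_nat n)%Z) mneg.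

Lemma mneg_nonneg : Z_law q -> 0 <= mneg.
Proof.
  intros [Hq0 _]. apply (is_series_nonneg _ _ (proj2 (is_series_Reals _ _) Hmneg)).
  intros n. apply Rmult_le_pos; [apply pos_INR|apply Hq0].
Qed.

Lemma is_series_zterms_negpart : is_series (zterms q negpart) mneg.
Proof.
  assert (H : is_series (fun n => INR (S n) * q (- Z.of_nat (S n))%Z) mneg).
  { apply (is_series_incr_1 (fun n => INR n * q (- Z.of_nat n)%Z)).
    simpl. rewrite Rmult_0_l. change (plus mneg 0) with (mneg + 0). rewrite Rplus_0_r.
    apply is_series_Reals, Hmneg. }
  eapply is_series_ext; [|exact H]. intros n. unfold zterms, negpart.
  rewrite Z.max_l, Z.max_r by lia.
  replace (- Z.of_nat (S n))%Z with (- Z.of_nat n - 1)%Z by lia.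
  replace (- (- Z.of_nat n - 1))%Z with (Z.of_nat (S n)) by lia.
  rewrite <- INR_IZR_INZ. simpl; ring.
Qed.

Lemma Zintegrable_negpart : Zintegrable q negpart.
Proof. exists mneg. apply is_series_zterms_negpart. Qed.

Lemma Zexp_negpart : Zexp q negpart = mneg.
Proof. apply Zexp_unique, is_series_zterms_negpart. Qed.

End NegativePart.

Lemma ind_leb_add_ltb (d a : Z) : ind (d <=? a)%Z + ind (a <? d)%Z = 1.
Proof. destruct (Z.leb_spec d a), (Z.ltb_spec a d); simpl; lia || ring. Qed.

Definition unit_valued (phi : Z -> R) : Prop := forall d, 0 <= phi d <= 1.

Definition Zdecreasing (phi : Z -> R) : Prop := forall d d', (d <= d')%Z -> phi d' <= phi d.

Definition Kexp_jump (p : nat -> nat -> R) (x : nat) (phi : Z -> R) : R :=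
  Kexp p x (fun y => phi (Z.of_nat y - Z.of_nat x)%Z).

Definition Zexp_trunc (q : Z -> R) (L : Z) (phi : Z -> R) : R :=
  Zexp q (fun z => phi (Z.min z L)).

Section Domination.

Variables (p : nat -> nat -> R) (q : Z -> R) (L : Z) (mneg : R) (x : nat).
Hypotheses (Hp : stochastic_kernel p) (Hq : Z_law q)
  (Hdom : forall (i : nat) (j : Z), Z_tail q j <= jump_tail p i j).
Hypotheses (HL : (0 <= L)%Z)
  (Hmneg : infinite_sum (fun n => INR n * q (- Z.of_nat n)%Z) mneg).

Lemma Kexp_jump_ind_le (a : Z) :
  (a < L)%Z ->
  Kexp_jump p x (fun d => ind (d <=? a)%Z) <= Zexp_trunc q L (fun d => ind (d <=? a)%Z).
Proof.
  intros HaL.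
  assert (HK : Kexp_jump p x (fun d => ind (d <=? a)%Z) + jump_tail p x a = 1).
  { assert (Htail : jump_tail p x a = Kexp p x (fun y => ind (a <? Z.of_nat y - Z.of_nat x)%Z)).
    { unfold jump_tail, Kexp. f_equal. apply functional_extensionality. intros y.
      destruct (a <? _)%Z; simpl; ring. }
    rewrite Htail, <- (Rmult_1_l (Kexp p x _)). unfold Kexp_jump.
    rewrite <- Kexp_lin by (auto; apply bounded_ind).
    etransitivity; [|apply (Kexp_const p Hp x 1)]. apply Kexp_ext. intros y.
    rewrite Rmult_1_l. apply ind_leb_add_ltb. }
  assert (HZ : Zexp_trunc q L (fun d => ind (d <=? a)%Z) + Zexp q (fun z => ind (a <? z)%Z) = 1).
  { rewrite <- (Rmult_1_l (Zexp q (fun z => _))). unfold Zexp_trunc.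
    rewrite <- Zexp_lin by (auto; apply (Zintegrable_bounded q Hq), bounded_ind).
    etransitivity; [|apply (Zexp_const q Hq 1)]. apply Zexp_ext. intros z.
    rewrite Rmult_1_l, <- (ind_leb_add_ltb z a).
    destruct (Z.leb_spec (Z.min z L) a), (Z.leb_spec z a); simpl; lia || ring. }
  pose proof (Zexp_gt_le_tail q a Hq). pose proof (Hdom x a). lra.
Qed.

Lemma Kexp_jump_le_trunc_step (h : nat) (psi : Z -> R) :
  unit_valued psi -> Zdecreasing psi ->
  (forall d, (d <= L - Z.of_nat h)%Z -> psi d = psi (L - Z.of_nat h)%Z) ->
  (forall d, (L <= d)%Z -> psi d = psi L) ->
  Kexp_jump p x psi <= Zexp_trunc q L psi.
Proof.
  revert psi. induction h as [|h IH]; intros psi H01 Hdec Hlo Hhi.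
  - assert (Hc : forall d, psi d = psi L).
    { intros d. destruct (Z_le_gt_dec L d); [apply Hhi; lia|].
      rewrite Hlo by lia. f_equal; lia. }
    unfold Kexp_jump, Zexp_trunc.
    rewrite (Kexp_ext p x _ (fun _ => psi L)), (Zexp_ext q _ (fun _ => psi L)) by auto.
    rewrite Kexp_const, Zexp_const by auto. lra.
  - (* Peel off the lowest step of [psi]: its jump [c] at [a] is an indicator of [d <= a]. *)
    set (a := (L - Z.of_nat (S h))%Z).
    set (psi' := fun d => if (d <=? a)%Z then psi (a + 1)%Z else psi d).
    set (c := psi a - psi (a + 1)%Z).
    assert (Hc : 0 <= c) by (unfold c; pose proof (Hdec a (a + 1)%Z ltac:(lia)); lra).
    assert (Hsplit : forall d, psi d = psi' d + c * ind (d <=? a)%Z).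
    { intros d. unfold psi', c. destruct (Z.leb_spec d a); simpl; [|ring].
      rewrite (Hlo d) by lia. unfold a. ring. }
    assert (H01' : unit_valued psi').
    { intros d; unfold psi'; destruct (d <=? a)%Z; auto. }
    assert (IH' : Kexp_jump p x psi' <= Zexp_trunc q L psi').
    { apply IH; auto.
      - intros d d' Hd. unfold psi'.
        destruct (Z.leb_spec d a), (Z.leb_spec d' a); try lra; apply Hdec; lia.
      - intros d Hd. unfold psi'.
        destruct (Z.leb_spec d a), (Z.leb_spec (L - Z.of_nat h) a); try lia; f_equal; lia.
      - intros d Hd. unfold psi'.
        destruct (Z.leb_spec d a), (Z.leb_spec L a); try lia. apply Hhi; lia. }
    assert (HK : Kexp_jump p x psi
                 = Kexp_jump p x psi' + c * Kexp_jump p x (fun d => ind (d <=? a)%Z)).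
    { unfold Kexp_jump. rewrite <- Kexp_lin by first
        [assumption | apply bounded_ind | apply bounded_of_unit_interval; intros; apply H01'].
      apply Kexp_ext. intros y. apply Hsplit. }
    assert (HZ : Zexp_trunc q L psi
                 = Zexp_trunc q L psi' + c * Zexp_trunc q L (fun d => ind (d <=? a)%Z)).
    { unfold Zexp_trunc. rewrite <- Zexp_lin by first
        [assumption | apply (Zintegrable_unit_interval q Hq); intros;
         first [apply ind_bounds | apply H01']].
      apply Zexp_ext. intros z. apply Hsplit. }
    rewrite HK, HZ.
    pose proof (Kexp_jump_ind_le a ltac:(unfold a; lia)).
    pose proof (Rmult_le_compat_l c _ _ Hc H). lra.
Qed.

Lemma Kexp_jump_le_trunc (phi : Z -> R) :
  unit_valued phi -> Zdecreasing phi -> Kexp_jump p x phi <= Zexp_trunc q L phi.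
Proof.
  intros H01 Hdec.
  apply (le_of_le_plus_div_succ _ _ mneg). intros D.
  (* [psi] agrees with [phi] on [[-D, L]], is [1] below and constant above; the error
     made below [-D] is controlled by Markov's inequality for the negative part. *)
  set (psi := fun d => if (d <? - Z.of_nat D)%Z then 1 else if (L <? d)%Z then phi L else phi d).
  assert (Hpsi01 : unit_valued psi).
  { intros d; unfold psi. destruct (d <? _)%Z; [lra|]. destruct (L <? d)%Z; auto. }
  assert (HP : Kexp_jump p x phi <= Kexp_jump p x psi).
  { apply Kexp_le; auto; try (apply bounded_of_unit_interval; intros; auto).
    intros y. unfold psi. set (d := (Z.of_nat y - Z.of_nat x)%Z).
    destruct (Z.ltb_spec d (- Z.of_nat D)); [apply H01|].
    destruct (Z.ltb_spec L d); [apply Hdec; lia|lra]. }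
  assert (Hstep : Kexp_jump p x psi <= Zexp_trunc q L psi).
  { apply (Kexp_jump_le_trunc_step (Z.to_nat (L + Z.of_nat D + 1))); auto.
    - intros d d' Hd. pose proof (H01 d'). pose proof (H01 L). unfold psi.
      destruct (Z.ltb_spec d (- Z.of_nat D)), (Z.ltb_spec d' (- Z.of_nat D)); try lia; try lra;
      destruct (Z.ltb_spec L d), (Z.ltb_spec L d'); try lia; try lra; apply Hdec; lia.
    - intros d Hd. rewrite Z2Nat.id in * by lia. unfold psi.
      destruct (Z.ltb_spec d (- Z.of_nat D)),
        (Z.ltb_spec (L - (L + Z.of_nat D + 1)) (- Z.of_nat D)); lia || reflexivity.
    - intros d Hd. unfold psi.
      destruct (Z.ltb_spec d (- Z.of_nat D)), (Z.ltb_spec L (- Z.of_nat D)); try lia.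
      destruct (Z.ltb_spec L d), (Z.ltb_spec L L); try lia; auto. f_equal; lia. }
  assert (HQ : Zexp_trunc q L psi <= Zexp_trunc q L phi + / (INR D + 1) * mneg).
  { unfold Zexp_trunc. rewrite <- (Zexp_negpart q mneg Hmneg).
    assert (Hphi : Zintegrable q (fun z => phi (Z.min z L)))
      by (apply (Zintegrable_unit_interval q Hq); intros; apply H01).
    pose proof (Zintegrable_negpart q mneg Hmneg) as Hneg.
    rewrite <- Zexp_lin by assumption.
    apply Zexp_le; auto using Zintegrable_lin.
    - apply (Zintegrable_unit_interval q Hq); intros; apply Hpsi01.
    - intros z. unfold psi. pose proof (negpart_nonneg z). pose proof (H01 (Z.min z L)).
      pose proof (pos_INR D).
      assert (HD : 0 < / (INR D + 1)) by (apply Rinv_0_lt_compat; lra).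
      destruct (Z.ltb_spec (Z.min z L) (- Z.of_nat D)).
      + assert (Hz : INR D + 1 <= negpart z).
        { unfold negpart. rewrite INR_IZR_INZ, <- plus_IZR. apply IZR_le. lia. }
        apply (Rmult_le_compat_l (/ (INR D + 1))) in Hz; [|lra].
        rewrite Rinv_l in Hz by lra. lra.
      + destruct (Z.ltb_spec L (Z.min z L)); [lia|].
        pose proof (Rmult_le_pos _ _ (Rlt_le _ _ HD) (negpart_nonneg z)). lra. }
  unfold Rdiv. rewrite Rmult_comm. lra.
Qed.

End Domination.

Fixpoint survival (q : Z -> R) (L : Z) (m : nat) (k : Z) : R :=
  match m with
  | O => ind (0 <? k)%Z
  | S m' => if (0 <? k)%Z then Zexp q (fun z => survival q L m' (k + Z.min z L)%Z) else 0
  end.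

Section Survival.

Variables (q : Z -> R) (L : Z).
Hypothesis Hq : Z_law q.

Lemma survival_bounds (m : nat) (k : Z) : 0 <= survival q L m k <= 1.
Proof.
  revert k; induction m as [|m IH]; intros k; simpl; [apply ind_bounds|].
  destruct (0 <? k)%Z; [|lra].
  apply (Zexp_unit_interval q Hq). intros z; apply IH.
Qed.

Lemma Zintegrable_survival (m : nat) (f : Z -> Z) :
  Zintegrable q (fun z => survival q L m (f z)).
Proof.
  apply (Zintegrable_unit_interval q Hq). intros; apply survival_bounds.
Qed.

Lemma survival_nonpos (m : nat) (k : Z) : (k <= 0)%Z -> survival q L m k = 0.
Proof. intros Hk. destruct m; simpl; destruct (Z.ltb_spec 0 k); simpl; lia || reflexivity. Qed.

Lemma survival_S_pos (m : nat) (k : Z) :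
  (0 < k)%Z -> survival q L (S m) k = Zexp q (fun z => survival q L m (k + Z.min z L)%Z).
Proof. intros Hk. simpl. destruct (Z.ltb_spec 0 k); [reflexivity|lia]. Qed.

Lemma survival_mono (m : nat) (k k' : Z) :
  (k <= k')%Z -> survival q L m k <= survival q L m k'.
Proof.
  revert k k'; induction m as [|m IH]; intros k k' Hk.
  - simpl. destruct (Z.ltb_spec 0 k), (Z.ltb_spec 0 k'); simpl; lia || lra.
  - destruct (Z.ltb_spec 0 k).
    + rewrite !survival_S_pos by lia.
      apply Zexp_le; auto using Zintegrable_survival. intros z; apply IH; lia.
    + rewrite survival_nonpos by lia. apply survival_bounds.
Qed.

Lemma survival_succ_le (m : nat) (k : Z) : survival q L (S m) k <= survival q L m k.
Proof.
  revert k; induction m as [|m IH]; intros k;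
    (destruct (Z.ltb_spec 0 k); [|rewrite !survival_nonpos by lia; lra]).
  - replace (survival q L 0 k) with 1 by (simpl; destruct (Z.ltb_spec 0 k); [reflexivity|lia]).
    apply survival_bounds.
  - rewrite !survival_S_pos by lia.
    apply Zexp_le; auto using Zintegrable_survival.
Qed.

Lemma survival_anti (m m' : nat) (k : Z) :
  (m <= m')%nat -> survival q L m' k <= survival q L m k.
Proof.
  induction 1; [lra|]. eapply Rle_trans; [apply survival_succ_le|assumption].
Qed.

(* Markov's inequality: leaving the positive half-line from [k] within [m] steps needs a
   downward displacement of at least [k], whose mean is at most [m * E eta^-]. *)
Lemma survival_markov (mneg : R) (m : nat) (k : Z) :
  (0 <= L)%Z -> infinite_sum (fun n => INR n * q (- Z.of_nat n)%Z) mneg ->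
  (1 - survival q L m k) * IZR k <= INR m * mneg.
Proof.
  intros HL Hmneg. pose proof (mneg_nonneg q mneg Hmneg Hq) as Hm0.
  revert k; induction m as [|m IH]; intros k.
  - simpl. destruct (Z.ltb_spec 0 k); simpl; [lra|]. apply IZR_le in H. lra.
  - destruct (Z.ltb_spec 0 k) as [Hk|Hk].
    2:{ rewrite survival_nonpos by lia. apply IZR_le in Hk. pose proof (pos_INR (S m)). nra. }
    rewrite survival_S_pos by lia.
    assert (Hneg : Zintegrable q negpart) by exact (Zintegrable_negpart q mneg Hmneg).
    replace ((1 - _) * IZR k)
      with (Zexp q (fun z => IZR k + (- IZR k) * survival q L m (k + Z.min z L)%Z))
      by (rewrite Zexp_lin, Zexp_const by auto using Zintegrable_survival, Zintegrable_const;
          ring).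
    replace (INR (S m) * mneg) with (Zexp q (fun z => INR m * mneg + 1 * negpart z))
      by (rewrite Zexp_lin, Zexp_const, (Zexp_negpart q mneg Hmneg), S_INR
            by auto using Zintegrable_const; ring).
    apply Zexp_le; try apply Zintegrable_lin; auto using Zintegrable_survival, Zintegrable_const.
    intros z. specialize (IH (k + Z.min z L)%Z). rewrite plus_IZR in IH.
    pose proof (survival_bounds m (k + Z.min z L)%Z). pose proof (negpart_nonneg z).
    assert (- IZR (Z.min z L) <= negpart z)
      by (unfold negpart; rewrite <- opp_IZR; apply IZR_le; lia).
    nra.
Qed.

End Survival.

Fixpoint sum_upto (f : nat -> R) (N : nat) : R :=
  match N with
  | O => 0
  | S N' => sum_upto f N' + f N'
  end.

Lemma sum_upto_ext (f g : nat -> R) (N : nat) :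
  (forall k, f k = g k) -> sum_upto f N = sum_upto g N.
Proof. intros H; induction N; simpl; [reflexivity|]. rewrite IHN, H; reflexivity. Qed.

Lemma sum_upto_minus (f g : nat -> R) (N : nat) :
  sum_upto (fun k => f k - g k) N = sum_upto f N - sum_upto g N.
Proof. induction N; simpl; [ring|]. rewrite IHN; ring. Qed.

Lemma sum_upto_telescope (g : nat -> R) (N : nat) :
  sum_upto (fun k => g (S k) - g k) N = g N - g 0%nat.
Proof. induction N; simpl; [ring|]. rewrite IHN; ring. Qed.

Lemma sum_upto_le (f g : nat -> R) (N : nat) :
  (forall k, f k <= g k) -> sum_upto f N <= sum_upto g N.
Proof. intros H; induction N; simpl; [lra|]. specialize (H N); lra. Qed.

Lemma sum_upto_le_const (f : nat -> R) (c : R) (N : nat) :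
  (forall k, (k < N)%nat -> f k <= c) -> sum_upto f N <= INR N * c.
Proof.
  induction N as [|N IH]; intros H; simpl sum_upto; [simpl; lra|].
  rewrite S_INR. pose proof (H N ltac:(lia)).
  assert (sum_upto f N <= INR N * c) by (apply IH; intros; apply H; lia). lra.
Qed.

Section ZExpectationSums.

Variable q : Z -> R.
Hypothesis Hq : Z_law q.

Lemma Zintegrable_sum_upto (F : nat -> Z -> R) (N : nat) :
  (forall k, Zintegrable q (F k)) -> Zintegrable q (fun z => sum_upto (fun k => F k z) N).
Proof.
  intros HF. induction N as [|N IH]; simpl.
  - apply Zintegrable_const, Hq.
  - apply Zintegrable_plus; auto.
Qed.

Lemma Zexp_sum_upto (F : nat -> Z -> R) (N : nat) :
  (forall k, Zintegrable q (F k)) ->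
  Zexp q (fun z => sum_upto (fun k => F k z) N) = sum_upto (fun k => Zexp q (F k)) N.
Proof.
  intros HF. induction N as [|N IH]; simpl.
  - apply Zexp_const, Hq.
  - rewrite Zexp_plus, IH by auto using Zintegrable_sum_upto. reflexivity.
Qed.

End ZExpectationSums.

Definition shift_sum (al : Z -> R) (x : Z) (N : nat) : R :=
  sum_upto (fun k => al (Z.of_nat k + 1 + x)%Z - al (Z.of_nat k + 1)%Z) N.

Lemma shift_sum_succ (al : Z -> R) (x : Z) (N : nat) :
  shift_sum al (x + 1) N = shift_sum al x N + (al (Z.of_nat N + 1 + x)%Z - al (1 + x)%Z).
Proof.
  assert (H : shift_sum al (x + 1) N - shift_sum al x N
              = sum_upto (fun k => (fun j => al (Z.of_nat j + 1 + x)%Z) (S k)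
                                   - (fun j => al (Z.of_nat j + 1 + x)%Z) k) N).
  { unfold shift_sum. rewrite <- sum_upto_minus. apply sum_upto_ext. intros k.
    replace (Z.of_nat (S k) + 1 + x)%Z with (Z.of_nat k + 1 + (x + 1))%Z by lia. ring. }
  rewrite sum_upto_telescope in H. cbv beta in H.
  replace (Z.of_nat 0 + 1 + x)%Z with (1 + x)%Z in H by lia. lra.
Qed.

Section ShiftSum.

Variable al : Z -> R.
Hypotheses (Hal01 : forall k, 0 <= al k <= 1) (Halmono : forall k k', (k <= k')%Z -> al k <= al k').

Lemma shift_sum_nat_ge (N n : nat) :
  INR n * (al (Z.of_nat N + 1)%Z - al (Z.of_nat n)) <= shift_sum al (Z.of_nat n) N.
Proof.
  induction n as [|n IH].
  - unfold shift_sum. rewrite (sum_upto_ext _ (fun _ => 0)).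
    + clear. simpl. induction N; simpl; lra.
    + intros k. replace (Z.of_nat k + 1 + Z.of_nat 0)%Z with (Z.of_nat k + 1)%Z by lia. ring.
  - replace (Z.of_nat (S n)) with (Z.of_nat n + 1)%Z by lia. rewrite shift_sum_succ, S_INR.
    assert (al (Z.of_nat n) <= al (Z.of_nat n + 1)%Z) by (apply Halmono; lia).
    assert (al (Z.of_nat N + 1)%Z <= al (Z.of_nat N + 1 + Z.of_nat n)%Z) by (apply Halmono; lia).
    replace (1 + Z.of_nat n)%Z with (Z.of_nat n + 1)%Z by lia.
    pose proof (pos_INR n). pose proof (Hal01 (Z.of_nat n + 1)%Z). nra.
Qed.

Lemma shift_sum_neg_ge (N y : nat) : - INR y <= shift_sum al (- Z.of_nat y) N.
Proof.
  induction y as [|y IH].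
  - unfold shift_sum. rewrite (sum_upto_ext _ (fun _ => 0)).
    + clear. simpl. induction N; simpl; lra.
    + intros k. replace (Z.of_nat k + 1 + - Z.of_nat 0)%Z with (Z.of_nat k + 1)%Z by lia. ring.
  - pose proof (shift_sum_succ al (- Z.of_nat (S y)) N) as H.
    replace (- Z.of_nat (S y) + 1)%Z with (- Z.of_nat y)%Z in H by lia.
    pose proof (Hal01 (Z.of_nat N + 1 + - Z.of_nat (S y))%Z).
    pose proof (Hal01 (1 + - Z.of_nat (S y))%Z). rewrite S_INR. lra.
Qed.

Lemma pospart_sub_shift_sum_le (L x : Z) (N : nat) :
  (x <= L)%Z -> (0 <= L)%Z ->
  pospart x - shift_sum al x N <= negpart x + IZR L * al x + IZR L * (1 - al (Z.of_nat N + 1)%Z).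
Proof.
  intros HxL HL. pose proof (IZR_le _ _ HL). pose proof (Hal01 x).
  pose proof (Hal01 (Z.of_nat N + 1)%Z). unfold pospart, negpart.
  destruct (Z_le_gt_dec 0 x) as [Hx|Hx].
  - destruct (Z_of_nat_complete x Hx) as [n ->].
    pose proof (shift_sum_nat_ge N n).
    rewrite Z.max_r, Z.max_l, <- INR_IZR_INZ by lia.
    assert (INR n <= IZR L) by (rewrite INR_IZR_INZ; apply IZR_le; lia).
    pose proof (pos_INR n). nra.
  - assert (Hy : x = (- Z.of_nat (Z.to_nat (- x)))%Z) by lia.
    set (y := Z.to_nat (- x)) in Hy. clearbody y. subst x.
    pose proof (shift_sum_neg_ge N y).
    rewrite Z.max_l, Z.max_r by lia. rewrite Z.opp_involutive, <- INR_IZR_INZ. nra.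
Qed.

End ShiftSum.

Definition escape (q : Z -> R) (L : Z) (m : nat) : R := Zexp_trunc q L (survival q L m).

Definition trunc_pos_mean (q : Z -> R) (L : Z) : R := Zexp_trunc q L pospart.

Lemma Zintegrable_trunc_pospart (q : Z -> R) (L : Z) :
  Z_law q -> (0 <= L)%Z -> Zintegrable q (fun z => pospart (Z.min z L)).
Proof.
  intros Hq HL. apply (Zintegrable_bounded q Hq). exists (IZR L). intros z.
  unfold pospart. rewrite Rabs_pos_eq by (apply IZR_le; lia). apply IZR_le; lia.
Qed.

Section Escape.

Variables (q : Z -> R) (L : Z) (mneg : R).
Hypotheses (Hq : Z_law q) (HL : (0 <= L)%Z)
  (Hmneg : infinite_sum (fun n => INR n * q (- Z.of_nat n)%Z) mneg).

Lemma escape_bounds (m : nat) : 0 <= escape q L m <= 1.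
Proof.
  apply (Zexp_unit_interval q Hq). intros z; apply survival_bounds, Hq.
Qed.

Lemma escape_anti (m m' : nat) : (m <= m')%nat -> escape q L m' <= escape q L m.
Proof.
  intros Hm. apply Zexp_le; auto using Zintegrable_survival.
  intros z; apply survival_anti; auto.
Qed.

Lemma sum_upto_escape_le (m n : nat) : sum_upto (escape q L) n <= INR m + INR n * escape q L m.
Proof.
  pose proof (escape_bounds m) as Hm.
  assert (H : sum_upto (escape q L) n <= INR (Nat.min n m) + INR (n - m) * escape q L m).
  { induction n as [|n IH]; simpl sum_upto; [simpl; lra|].
    destruct (Nat.lt_ge_cases n m) as [Hnm|Hmn].
    - replace (Nat.min (S n) m) with (S (Nat.min n m)) by lia.
      replace (S n - m)%nat with (n - m)%nat by lia.
      rewrite S_INR. pose proof (escape_bounds n). lra.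
    - replace (Nat.min (S n) m) with (Nat.min n m) by lia.
      replace (S n - m)%nat with (S (n - m)) by lia.
      rewrite S_INR. pose proof (escape_anti m n Hmn). lra. }
  assert (INR (Nat.min n m) <= INR m) by (apply le_INR; lia).
  assert (INR (n - m) * escape q L m <= INR n * escape q L m)
    by (apply Rmult_le_compat_r; [lra|apply le_INR; lia]).
  lra.
Qed.

(* [pospart_sub_shift_sum_le] at [x = min eta L], averaged: since
   [survival (S m) k = E survival m (k + min eta L)] for [k > 0], the expected shift sum is
   the sum of the increments [survival (S m) - survival m]. *)
Lemma escape_step (m N : nat) :
  trunc_pos_mean q L
  - sum_upto (fun k => survival q L (S m) (Z.of_nat k + 1)%Z - survival q L m (Z.of_nat k + 1)%Z) N
  <= mneg + IZR L * escape q L m + IZR L * (1 - survival q L m (Z.of_nat N + 1)%Z).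
Proof.
  set (F := fun (k : nat) z =>
              survival q L m (Z.of_nat k + 1 + Z.min z L)%Z - survival q L m (Z.of_nat k + 1)%Z).
  assert (HF : forall k, Zintegrable q (F k)).
  { intros k. unfold F, Rminus.
    apply Zintegrable_plus; auto using Zintegrable_survival, Zintegrable_const. }
  assert (Hshift : sum_upto (fun k => survival q L (S m) (Z.of_nat k + 1)%Z
                                      - survival q L m (Z.of_nat k + 1)%Z) N
                   = Zexp q (fun z => shift_sum (survival q L m) (Z.min z L) N)).
  { transitivity (Zexp q (fun z => sum_upto (fun k => F k z) N)); [|reflexivity].
    rewrite (Zexp_sum_upto q Hq F N HF). apply sum_upto_ext. intros k.
    rewrite survival_S_pos by lia. unfold F, Rminus.
    rewrite Zexp_plus, Zexp_const; auto using Zintegrable_survival, Zintegrable_const. }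
  assert (Hint_shift : Zintegrable q (fun z => shift_sum (survival q L m) (Z.min z L) N))
    by (apply (Zintegrable_sum_upto q Hq F N HF)).
  pose proof (Zintegrable_trunc_pospart q L Hq HL) as Hint_pos.
  assert (Hint_neg : Zintegrable q negpart) by exact (Zintegrable_negpart q mneg Hmneg).
  rewrite Hshift.
  replace (trunc_pos_mean q L - _)
    with (Zexp q (fun z => pospart (Z.min z L) + (-1) * shift_sum (survival q L m) (Z.min z L) N))
    by (rewrite Zexp_lin by assumption; unfold trunc_pos_mean, Zexp_trunc; ring).
  replace (mneg + _ + _) with (Zexp q (fun z => negpart z + IZR L * survival q L m (Z.min z L)
                                 + IZR L * (1 - survival q L m (Z.of_nat N + 1)%Z)))
    by (rewrite !Zexp_lin, Zexp_const, (Zexp_negpart q mneg Hmneg)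
          by auto using Zintegrable_survival, Zintegrable_lin, Zintegrable_const;
        unfold escape, Zexp_trunc; ring).
  apply Zexp_le; auto using Zintegrable_lin, Zintegrable_survival, Zintegrable_const.
  intros z.
  replace (negpart z) with (negpart (Z.min z L)) by (unfold negpart; f_equal; lia).
  enough (pospart (Z.min z L) - shift_sum (survival q L m) (Z.min z L) N
          <= negpart (Z.min z L) + IZR L * survival q L m (Z.min z L)
             + IZR L * (1 - survival q L m (Z.of_nat N + 1)%Z)) by lra.
  apply pospart_sub_shift_sum_le; auto using survival_mono; try lia.
  intros; apply survival_bounds, Hq.
Qed.

Lemma escape_steps (n N : nat) :
  INR n * trunc_pos_mean q L
  - (sum_upto (fun k => survival q L n (Z.of_nat k + 1)%Z) N
     - sum_upto (fun k => survival q L 0 (Z.of_nat k + 1)%Z) N)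
  <= INR n * mneg + IZR L * sum_upto (escape q L) n
     + IZR L * sum_upto (fun m => 1 - survival q L m (Z.of_nat N + 1)%Z) n.
Proof.
  induction n as [|n IH]; [simpl; lra|].
  pose proof (escape_step n N) as H. rewrite sum_upto_minus in H.
  cbn [sum_upto]. rewrite S_INR. lra.
Qed.

Lemma drift_le_escape_sum (n : nat) :
  INR n * (trunc_pos_mean q L - mneg) <= IZR L * sum_upto (escape q L) n.
Proof.
  pose proof (mneg_nonneg q mneg Hmneg Hq) as Hm0. pose proof (IZR_le _ _ HL) as HL0.
  (* Let the level [N + 1] tend to infinity: survival from far away is nearly certain. *)
  apply (le_of_le_plus_div_succ _ _ (IZR L * INR n * INR n * mneg)). intros N.
  pose proof (escape_steps n N) as H.
  assert (H1 : sum_upto (fun k => survival q L n (Z.of_nat k + 1)%Z) N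
               <= sum_upto (fun k => survival q L 0 (Z.of_nat k + 1)%Z) N).
  { apply sum_upto_le. intros k. apply survival_anti; auto; lia. }
  pose proof (pos_INR N).
  assert (H2 : sum_upto (fun m => 1 - survival q L m (Z.of_nat N + 1)%Z) n
               <= INR n * (INR n * mneg / (INR N + 1))).
  { apply sum_upto_le_const. intros m Hmn.
    pose proof (survival_markov q L Hq mneg m (Z.of_nat N + 1) HL Hmneg) as Hk.
    rewrite plus_IZR, <- INR_IZR_INZ in Hk.
    assert (INR m <= INR n) by (apply le_INR; lia).
    apply Rle_div_r; [lra|]. pose proof (survival_bounds q L Hq m (Z.of_nat N + 1)). nra. }
  apply (Rmult_le_compat_l (IZR L)) in H2; [|assumption].
  replace (IZR L * INR n * INR n * mneg / (INR N + 1))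
    with (IZR L * (INR n * (INR n * mneg / (INR N + 1)))) by (field; lra).
  lra.
Qed.

Lemma escape_ge (m : nat) : trunc_pos_mean q L - mneg <= IZR L * escape q L m.
Proof.
  pose proof (IZR_le _ _ HL) as HL0.
  (* Cesaro: the averages of the decreasing sequence [escape] tend to its limit. *)
  apply Rminus_le, (le_of_le_plus_div_succ _ _ (IZR L * INR m)). intros n.
  pose proof (drift_le_escape_sum (S n)) as H1.
  pose proof (sum_upto_escape_le m (S n)) as H2. rewrite S_INR in *.
  pose proof (pos_INR n).
  apply (Rmult_le_compat_l (IZR L)) in H2; [|assumption].
  rewrite Rplus_0_l. apply Rle_div_r; [lra|]. nra.
Qed.

End Escape.

Lemma trunc_pos_mean_ge_partial (q : Z -> R) (N : nat) :
  Z_law q ->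
  sum_f_R0 (fun n => INR n * q (Z.of_nat n)) N <= trunc_pos_mean q (Z.of_nat (S N)).
Proof.
  intros Hq. pose proof Hq as [Hq0 _]. set (L := Z.of_nat (S N)).
  assert (Hint : Zintegrable q (fun z => pospart (Z.min z L)))
    by (apply Zintegrable_trunc_pospart; [assumption|unfold L; lia]).
  rewrite (sum_eq _ (zterms q (fun z => pospart (Z.min z L)))).
  - apply is_series_partial_le; [apply Zexp_is, Hint|].
    intros n; unfold zterms.
    pose proof (Hq0 (Z.of_nat n)). pose proof (Hq0 (- Z.of_nat n - 1)%Z).
    pose proof (pospart_nonneg (Z.min (Z.of_nat n) L)).
    pose proof (pospart_nonneg (Z.min (- Z.of_nat n - 1) L)). nra.
  - intros n Hn. unfold zterms, pospart.
    rewrite Z.min_l, Z.min_l, Z.max_r, Z.max_l, <- INR_IZR_INZ by (unfold L; lia).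
    simpl. ring.
Qed.

Lemma exp_rate (theta : R) :
  0 < theta <= 1 -> exists g, 0 < g /\ exp g * (2 - theta) <= 2.
Proof.
  intros Hth. exists (ln (2 / (2 - theta))).
  assert (Hpos : 0 < 2 / (2 - theta)) by (apply Rdiv_lt_0_compat; lra).
  rewrite exp_ln by exact Hpos. split; [|right; field; lra].
  rewrite <- ln_1. apply ln_increasing; [lra|].
  apply Rlt_div_r; lra.
Qed.

Section LocalTime.

Variables (p : nat -> nat -> R) (q : Z -> R) (L : Z) (mneg : R).
Hypotheses (Hp : stochastic_kernel p) (Hq : Z_law q)
  (Hdom : forall (i : nat) (j : Z), Z_tail q j <= jump_tail p i j).
Hypotheses (HL : (0 <= L)%Z)
  (Hmneg : infinite_sum (fun n => INR n * q (- Z.of_nat n)%Z) mneg).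

Lemma Zexp_survival_le_Kexp (n x i : nat) :
  Zexp q (fun z => survival q L n (Z.of_nat x - Z.of_nat i + Z.min z L)%Z)
  <= Kexp p x (fun y => survival q L n (Z.of_nat y - Z.of_nat i)%Z).
Proof.
  set (k := (Z.of_nat x - Z.of_nat i)%Z).
  set (phi := fun d => 1 - survival q L n (d + k)%Z).
  assert (H : Kexp_jump p x phi <= Zexp_trunc q L phi).
  { apply (Kexp_jump_le_trunc p q L mneg x Hp Hq Hdom HL Hmneg).
    - intros d; unfold phi; pose proof (survival_bounds q L Hq n (d + k)%Z); lra.
    - intros d d' Hd; unfold phi.
      pose proof (survival_mono q L Hq n (d + k) (d' + k) ltac:(lia)); lra. }
  unfold Kexp_jump, Zexp_trunc, phi in H.
  assert (Hsurv : bounded (fun y => survival q L n (Z.of_nat y - Z.of_nat i)%Z))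
    by (apply bounded_of_unit_interval; intros; apply survival_bounds, Hq).
  assert (HK : Kexp p x (fun y => 1 - survival q L n (Z.of_nat y - Z.of_nat x + k)%Z)
               = 1 - Kexp p x (fun y => survival q L n (Z.of_nat y - Z.of_nat i)%Z)).
  { rewrite (Kexp_ext p x _ (fun y => 1 + (-1) * survival q L n (Z.of_nat y - Z.of_nat i)%Z)).
    - rewrite Kexp_lin, Kexp_const by auto using bounded_const. ring.
    - intros y. unfold k.
      replace (Z.of_nat y - Z.of_nat x + (Z.of_nat x - Z.of_nat i))%Z
        with (Z.of_nat y - Z.of_nat i)%Z by lia. ring. }
  assert (HZ : Zexp q (fun z => 1 - survival q L n (Z.min z L + k)%Z)
               = 1 - Zexp q (fun z => survival q L n (k + Z.min z L)%Z)).
  { rewrite (Zexp_ext q _ (fun z => 1 + (-1) * survival q L n (k + Z.min z L)%Z)).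
    - rewrite Zexp_lin, Zexp_const by auto using Zintegrable_survival, Zintegrable_const.
      ring.
    - intros z. rewrite Z.add_comm. ring. }
  lra.
Qed.

Variables (theta g : R) (i : nat).
Hypotheses (Htheta : forall m, theta <= escape q L m) (Hg : exp g * (2 - theta) <= 2).

(* The bound is [2] at [x = i] (where [survival n 0 = 0]): a visit to [i] costs [e^g], and
   the positive escape probability from [i] brings the bound back to [2]. *)
Lemma exp_loc_le_survival (n x : nat) :
  0 <= exp_loc p g i n x <= 2 - survival q L n (Z.of_nat x - Z.of_nat i)%Z.
Proof.
  pose proof (Htheta 0%nat) as Hth1. pose proof (escape_bounds q L Hq 0) as Hesc.
  pose proof (exp_pos g) as Heg.
  revert x; induction n as [|n IH]; intros x.
  - simpl exp_loc. destruct (Nat.eqb_spec x i) as [->|Hxi]; simpl ind.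
    + rewrite Z.sub_diag, survival_nonpos, Rmult_1_r by lia. nra.
    + rewrite Rmult_0_r, exp_0.
      pose proof (survival_bounds q L Hq 0 (Z.of_nat x - Z.of_nat i)). lra.
  - change (exp_loc p g i (S n) x) with (exp (g * ind (Nat.eqb x i)) * Kexp p x (exp_loc p g i n)).
    set (k := (Z.of_nat x - Z.of_nat i)%Z).
    set (E := Zexp q (fun z => survival q L n (k + Z.min z L)%Z)).
    assert (Hbd : bounded (exp_loc p g i n)).
    { exists 2. intros y. specialize (IH y).
      pose proof (survival_bounds q L Hq n (Z.of_nat y - Z.of_nat i)). rewrite Rabs_pos_eq; lra. }
    assert (Hsurv : bounded (fun y => survival q L n (Z.of_nat y - Z.of_nat i)%Z))
      by (apply bounded_of_unit_interval; intros; apply survival_bounds, Hq).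
    assert (HK0 : 0 <= Kexp p x (exp_loc p g i n)).
    { rewrite <- (Kexp_const p Hp x 0). apply Kexp_le; auto using bounded_const. apply IH. }
    assert (HK : Kexp p x (exp_loc p g i n) <= 2 - E).
    { eapply Rle_trans.
      - apply (Kexp_le p Hp x _ (fun y => 2 + (-1) * survival q L n (Z.of_nat y - Z.of_nat i)%Z));
          auto using bounded_lin, bounded_const.
        intros y. specialize (IH y). lra.
      - rewrite Kexp_lin, Kexp_const by auto using bounded_const.
        pose proof (Zexp_survival_le_Kexp n x i). unfold E, k. lra. }
    destruct (Nat.eqb_spec x i) as [->|Hxi]; simpl ind.
    + rewrite Rmult_1_r. unfold k in *. rewrite Z.sub_diag, survival_nonpos in * by lia.
      assert (HE : E = escape q L n)
        by (unfold E, escape, Zexp_trunc; apply Zexp_ext; intros z; f_equal; lia).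
      pose proof (Htheta n).
      assert (exp g * Kexp p i (exp_loc p g i n) <= exp g * (2 - theta))
        by (apply Rmult_le_compat_l; lra).
      split; [apply Rmult_le_pos|]; lra.
    + rewrite Rmult_0_r, exp_0, Rmult_1_l. fold k.
      destruct (Z.ltb_spec 0 k).
      * rewrite survival_S_pos by lia. fold E. lra.
      * rewrite survival_nonpos by lia.
        assert (0 <= E) by (apply (Zexp_unit_interval q Hq); intros; apply survival_bounds, Hq).
        lra.
Qed.

End LocalTime.

Theorem proposition4 (p : nat -> nat -> R) (q : Z -> R) :
  stochastic_kernel p ->
  Z_law q ->
  Z_mean_pos q ->
  (forall (i : nat) (j : Z), Z_tail q j <= jump_tail p i j) ->
  exists g : R, 0 < g /\
    exists M : R, forall (i n : nat), exp_loc p g i n i <= M.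
Proof.
  intros Hp Hq [mneg [Hmneg [N Hmean]]] Hdom.
  pose proof (trunc_pos_mean_ge_partial q N Hq) as Hdrift.
  set (L := Z.of_nat (S N)) in Hdrift.
  assert (HL : (0 <= L)%Z) by (unfold L; lia).
  assert (HL1 : 1 <= IZR L) by (unfold L; apply IZR_le; lia).
  set (theta := (trunc_pos_mean q L - mneg) / IZR L).
  assert (Htheta : forall m, theta <= escape q L m).
  { intros m. unfold theta. apply Rle_div_l; [lra|].
    rewrite Rmult_comm. apply escape_ge; assumption. }
  assert (Htheta01 : 0 < theta <= 1).
  { split; [apply Rdiv_lt_0_compat; lra|].
    pose proof (Htheta 0%nat). pose proof (escape_bounds q L Hq 0). lra. }
  destruct (exp_rate theta Htheta01) as [g [Hg Hrate]].
  exists g. split; [exact Hg|]. exists 2. intros i n.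
  pose proof (exp_loc_le_survival p q L mneg Hp Hq Hdom HL Hmneg theta g i Htheta Hrate n i).
  rewrite Z.sub_diag, survival_nonpos in H by lia. lra.
Qed.
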